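(* Let $n\ge 1$ and $M\ge 1$ be integers, let $\mathcal{X}=\{x^{(1)},\dots,x^{(L)}\}\subset\mathbb{C}$ be a finite set of $L$ channel input symbols, let $\sigma^2>0$, let $g:\mathbb{C}\to[0,+\infty]$ be measurable, let $\epsilon>0$, $B>0$ and $\delta\in\mathbb{R}$. Let $\mathscr{C}$ be an $(n,M,\epsilon,B,\delta)$-code (as defined in the context). Then $$\delta\ge\Big(1-\frac1B\sum_{\ell=1}^L P_{\mathscr{C}}(x^{(\ell)})\,\mathbb{E}\big[g(x^{(\ell)}+W)\big]\Big)^+,$$ where $(a)^+=\max(a,0)$ and $W$ is a complex circularly symmetric Gaussian random variable whose real and imaginary parts have zero means and variances $\sigma^2/2$.
   Context: Channel: for an input $\boldsymbol{x}\in\mathbb{C}^n$ the outputs are $\boldsymbol{Y}=\boldsymbol{x}+\boldsymbol{N}_1$ and $\boldsymbol{Z}=\boldsymbol{x}+\boldsymbol{N}_2$, where all components of $\boldsymbol{N}_1,\boldsymbol{N}_2$ are i.i.d. complex circularly symmetric Gaussian with real and imaginary parts of zero mean and variance $\sigma^2/2$; so $f_{Y|X}(y|x)=\frac{1}{\pi\sigma^2}\exp(-|y-x|^2/\sigma^2)$ per coordinate and $f_{\boldsymbol{Y}|\boldsymbol{X}}(\boldsymbol{y}|\boldsymbol{x})=\prod_t f_{Y|X}(y_t|x_t)$ (same for $\boldsymbol{Z}$). An $(n,M)$-code is $\mathscr{C}=\{(\boldsymbol{u}(i),\mathcal{D}_i)\}_{i=1}^M$ with codewords $\boldsymbol{u}(i)=(u_1(i),\dots,u_n(i))\in\mathcal{X}^n$,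 $|u_t(i)|\le P$ for a fixed peak power $P>0$, and pairwise disjoint measurable decoding sets $\mathcal{D}_i\subseteq\mathbb{C}^n$; $M\le 2^{n\lfloor\log_2L\rfloor}$. Error probabilities: $\gamma_i(\mathscr{C})=1-\int_{\mathcal{D}_i}f_{\boldsymbol{Y}|\boldsymbol{X}}(\boldsymbol{y}|\boldsymbol{u}(i))d\boldsymbol{y}$, $\gamma(\mathscr{C})=\frac1M\sum_i\gamma_i$; $(n,M,\epsilon)$-code means $\gamma(\mathscr{C})<\epsilon$. With $\bar g(\boldsymbol z)=\frac1n\sum_t g(z_t)$: $\theta_i(\mathscr{C},B)=\Pr[\bar g(\boldsymbol Z)<B\mid\boldsymbol X=\boldsymbol u(i)]$, $\theta(\mathscr{C},B)=\frac1M\sum_i\theta_i$; $(n,M,\epsilon,B,\delta)$-code means an $(n,M,\epsilon)$-code with $\theta(\mathscr{C},B)<\delta$. Types: $P_{\boldsymbol u(i)}(x^{(\ell)})=\frac1n\#\{t:u_t(i)=x^{(\ell)}\}$, $P_{\mathscr{C}}=\frac1M\sum_iP_{\boldsymbol u(i)}$. *)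

(* C is represented as R * R
   (real part, imaginary part), C^n as n.-tuple (R * R) with its
   product sigma-algebra (library instance on tuples). *)
From HB Require Import structures.
From mathcomp Require Import all_boot all_order all_algebra.
From mathcomp Require Import all_classical all_reals all_analysis measurable_realfun.
Set Implicit Arguments. Unset Strict Implicit. Unset Printing Implicit Defensive.
Import Order.TTheory GRing.Theory Num.Theory.
Local Open Scope ring_scope.
Local Open Scope classical_set_scope.

Section Defs.
Variable R : realType.

Definition lebC := ((@lebesgue_measure R) \x (@lebesgue_measure R))%E.

Definition cnorm2 (z : R * R) : R := z.1 ^+ 2 + z.2 ^+ 2.
Definition cabs (z : R * R) : R := Num.sqrt (cnorm2 z).
Definition csub (y x : R * R) : R * R := (y.1 - x.1, y.2 - x.2).
Definition cadd (y x : R * R) : R * R := (y.1 + x.1, y.2 + x.2).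

Definition fYX (s2 : R) (x y : R * R) : R :=
  (pi * s2)^-1 * expR (- cnorm2 (csub y x) / s2).

(* int_{C^k} F(y) f_{Y|X}(y|u) dy for the memoryless channel, written as
   the iterated (Tonelli) integral over the k coordinates. *)
Fixpoint chanInt (s2 : R) (k : nat) :
  k.-tuple (R * R) -> (k.-tuple (R * R) -> \bar R) -> \bar R :=
  match k with
  | 0 => fun _ F => F [tuple]
  | k'.+1 => fun u F =>
      (\int[lebC]_y ((fYX s2 (thead u) y)%:E *
          chanInt s2 (behead_tuple u) (fun t => F [tuple of y :: t])))%E
  end.

Definition chanProb (s2 : R) (k : nat) (u : k.-tuple (R * R))
    (A : set (k.-tuple (R * R))) : \bar R :=
  chanInt s2 u (fun y => (\1_A y)%:E).

Definition gbar (g : R * R -> \bar R) (n : nat) (z : n.-tuple (R * R)) : \bar R :=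
  ((n%:R^-1)%:E * \sum_(t < n) g (tnth z t))%E.

Definition avg_err (s2 : R) (n M : nat) (u : 'I_M -> n.-tuple (R * R))
    (D : 'I_M -> set (n.-tuple (R * R))) : \bar R :=
  ((M%:R^-1)%:E * \sum_(i < M) (1 - chanProb s2 (u i) (D i)))%E.

Definition avg_theta (s2 : R) (g : R * R -> \bar R) (B : R) (n M : nat)
    (u : 'I_M -> n.-tuple (R * R)) : \bar R :=
  ((M%:R^-1)%:E *
     \sum_(i < M) chanProb s2 (u i) [set z | (gbar g z < B%:E)%E])%E.

Definition ctype (n : nat) (v : n.-tuple (R * R)) (x : R * R) : R :=
  n%:R^-1 * #|[set t : 'I_n | tnth v t == x]|%:R.
Definition code_type (n M : nat) (u : 'I_M -> n.-tuple (R * R)) (x : R * R) : R :=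
  M%:R^-1 * \sum_(i < M) ctype (u i) x.

(* E[g(x + W)], W ~ CN(0, sigma^2) with density f_{Y|X}(. | 0) *)
Definition EgW (s2 : R) (g : R * R -> \bar R) (x : R * R) : \bar R :=
  (\int[lebC]_w (g (cadd x w) * (fYX s2 (0, 0) w)%:E))%E.

Definition is_code (s2 P : R) (L : nat) (xs : 'I_L -> R * R) (n M : nat)
    (u : 'I_M -> n.-tuple (R * R)) (D : 'I_M -> set (n.-tuple (R * R)))
    (eps : R) : Prop :=
  [/\ (forall i t, exists l, tnth (u i) t = xs l),
      (forall i t, cabs (tnth (u i) t) <= P),
      (forall i, measurable (D i)),
      (forall i j, i != j -> D i `&` D j = set0) &
      (M <= 2 ^ (n * trunc_log 2 L))%N] /\
  (avg_err s2 u D < eps%:E)%E.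

Definition is_code_B (s2 P : R) (L : nat) (xs : 'I_L -> R * R) (n M : nat)
    (u : 'I_M -> n.-tuple (R * R)) (D : 'I_M -> set (n.-tuple (R * R)))
    (g : R * R -> \bar R) (eps B delta : R) : Prop :=
  is_code s2 P xs u D eps /\ (avg_theta s2 g B u < delta%:E)%E.

End Defs.

(* Markov's inequality for the average cost [gbar Z] of the received word
   gives, for every codeword u, Pr[gbar Z < B | u] >= 1 - E[gbar Z | u] / B.
   Since the coordinate Z_t of the output is distributed as u_t + W, the
   conditional mean E[gbar Z | u] is (1/n) sum_t E[g(u_t + W)].  Averaging
   over the M codewords regroups these terms by input symbol with weights
   given by the type of the code, and theta < delta concludes. *)

From Pilot Require Import Defs.
From HB Require Import structures.
From mathcomp Require Import all_boot all_order all_algebra.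
From mathcomp Require Import all_classical all_reals all_analysis measurable_realfun.
From mathcomp Require Import lra.
Import Order.TTheory GRing.Theory Num.Theory.
Local Open Scope ring_scope.
Local Open Scope classical_set_scope.

Section lebC_measure.
Variable R : realType.
Local Open Scope ereal_scope.

HB.instance Definition _ := Measure.copy (@lebC R)
  ((@lebesgue_measure R) \x (@lebesgue_measure R))%E.

Lemma lebC_sigma_finite : sigma_finite setT (@lebC R).
Proof.
have /sigma_finiteP[F [TF ndF Foo]] := sigma_finiteT (@lebesgue_measure R).
exists (fun n => F n `*` F n).
  rewrite -setXTT TF predeqE => -[x y]; split.
    move=> [/= [n _ Fnx] [k _ Fky]]; exists (maxn n k) => //; split.
    - by move: x Fnx; exact/subsetPset/ndF/leq_maxl.
    - by move: y Fky; exact/subsetPset/ndF/leq_maxr.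
  by move=> [n _ []/= ? ?]; split; exists n.
move=> k; have [? ?] := Foo k.
split; first exact: measurableX.
by rewrite /lebC product_measure1E// lte_mul_pinfty// ge0_fin_numE.
Qed.

HB.instance Definition _ := Measure_isSigmaFinite.Build _ _ _ (@lebC R)
  lebC_sigma_finite.

End lebC_measure.

Section gaussian_density.
Variables (R : realType) (s2 : R).
Hypothesis s2_gt0 : 0 < s2.
Local Notation LC := (@lebC R).
Let sigma : R := Num.sqrt (s2 / 2).

Lemma fYX_gt0 x y : 0 < fYX s2 x y.
Proof. by rewrite /fYX mulr_gt0 ?expR_gt0 // invr_gt0 mulr_gt0 // pi_gt0. Qed.

Lemma fYX_EFin_ge0 x y : (0 <= (fYX s2 x y)%:E)%E.
Proof. by rewrite lee_fin ltW // fYX_gt0. Qed.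

Lemma fYX_normal_pdf x y :
  fYX s2 x y = normal_pdf x.1 sigma y.1 * normal_pdf x.2 sigma y.2.
Proof.
have sigma_neq0 : sigma != 0 by rewrite /sigma gt_eqF // sqrtr_gt0 divr_gt0.
have sigma2 : sigma ^+ 2 *+ 2 = s2.
  by rewrite /sigma sqr_sqrtr ?divr_ge0 ?ltW // -mulr_natr -mulrA mulVf ?mulr1.
rewrite !normal_pdfE // /normal_peak /normal_fun /fYX sigma2 mulrACA -expRD.
have -> : - (y.1 - x.1) ^+ 2 / s2 + - (y.2 - x.2) ^+ 2 / s2
          = - cnorm2 (csub y x) / s2.
  by rewrite /cnorm2 /csub /= -mulrDl -opprD.
congr (_ * _).
rewrite -invfM -expr2 sqr_sqrtr; last by rewrite mulrn_wge0 // mulr_ge0 ?pi_ge0 // sqr_ge0.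
by rewrite -mulrnAl sigma2 mulrC.
Qed.

Lemma measurable_fYX x : measurable_fun setT (fYX s2 x).
Proof.
rewrite (_ : fYX s2 x = fun y => normal_pdf x.1 sigma y.1 * normal_pdf x.2 sigma y.2);
  last by apply/funext => y; rewrite fYX_normal_pdf.
by apply: measurable_funM; apply: measurableT_comp => //;
  exact: measurable_normal_pdf.
Qed.

Lemma EgW_ge0 (h : R * R -> \bar R) x :
  (forall y, 0 <= h y)%E -> (0 <= EgW s2 h x)%E.
Proof.
by move=> h0; apply: integral_ge0 => w _; rewrite mule_ge0 ?fYX_EFin_ge0.
Qed.

Lemma integral_fYX x : (\int[LC]_y (fYX s2 x y)%:E = 1)%E.
Proof.
under eq_integral do rewrite fYX_normal_pdf EFinM.
rewrite /lebC fubini_tonelli1 /=; last 2 first.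
- apply/measurable_EFinP; apply: measurable_funM; apply: measurableT_comp => //;
    exact: measurable_normal_pdf.
- by move=> z; rewrite -EFinM lee_fin mulr_ge0 // normal_pdf_ge0.
rewrite /fubini_F /=.
under eq_integral => y1 _.
  rewrite ge0_integralZl //; last 3 first.
  - by apply/measurable_EFinP; exact: measurable_normal_pdf.
  - by move=> z _; rewrite lee_fin normal_pdf_ge0.
  - by rewrite lee_fin normal_pdf_ge0.
  rewrite integral_normal_pdf mule1.
  over.
exact: integral_normal_pdf.
Qed.

End gaussian_density.

Section lebC_translation_invariance.
Variable R : realType.
Local Notation LC := (@lebC R).
Local Notation leb := (@lebesgue_measure R).
Local Notation T := (measurableTypeR R * measurableTypeR R)%type.

Lemma measurable_addr (c : R) : measurable_fun setT (fun w : R => c + w)%R.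
Proof. exact: measurable_funD. Qed.

Lemma measurable_cadd (c : R * R) : measurable_fun (setT : set T) (Defs.cadd c).
Proof.
apply/measurable_fun_pairP; split.
  by apply: measurable_funD => //; exact: measurable_fst.
by apply: measurable_funD => //; exact: measurable_snd.
Qed.

Lemma lebesgue_measure_shift (c : R) (A : set R) : measurable A ->
  leb ((fun w => c + w)%R @^-1` A) = leb A.
Proof.
move=> mA; apply/esym.
have := @lebesgue_measure_unique R
  (@pushforward _ _ (measurableTypeR R) (measurableTypeR R) R leb (fun w => c + w)%R).
move=> /(_ (measurable_addr c)) /(_ _ A mA) -> // _ [[a b] _ <-] /=.
rewrite /pushforward.
have -> : (fun w => c + w)%R @^-1` `]a, b] = `]a - c, b - c] :> set R.
  by apply/seteqP; split => w /=; rewrite !in_itv /= => /andP[? ?];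
    apply/andP; split; lra.
rewrite !lebesgue_measure_itv /= !lte_fin ltrD2r.
by case: ifP => // _; congr (_%:E); lra.
Qed.

Local Open Scope ereal_scope.

Lemma lebC_shift (c : R * R) (X : set T) : measurable X ->
  LC (Defs.cadd c @^-1` X) = LC X.
Proof.
move=> mX; apply/esym.
have := @product_measure_unique _ _ _ _ R leb leb
  (@pushforward _ _ T T R LC (Defs.cadd c)).
move=> /(_ (measurable_cadd c)) /(_ _ X mX); rewrite /lebC => -> // A B mA mB.
transitivity (LC (((fun w => c.1 + w)%R @^-1` A) `*` ((fun w => c.2 + w)%R @^-1` B)));
  first by [].
rewrite /lebC product_measure1E.
- by move: (lebesgue_measure_shift c.1 A mA) (lebesgue_measure_shift c.2 B mB) => /= -> ->.
- by rewrite -(setTI (_ @^-1` _)); exact: measurable_addr.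
- by rewrite -(setTI (_ @^-1` _)); exact: measurable_addr.
Qed.

(* The pushforward measure instance depends on a measurability proof, hence
   the explicit instance name. *)
Let lebC_pushforward (c : R * R) : {measure set T -> \bar R} :=
  @measure_function_pushforward__canonical__measure_function_Measure _ _ T T R
    LC (Defs.cadd c) (measurable_cadd c).

Lemma integral_lebC_shift (c : R * R) (phi : T -> \bar R) :
  measurable_fun setT phi -> (forall z, 0 <= phi z) ->
  \int[LC]_z phi z = \int[LC]_w phi (Defs.cadd c w).
Proof.
move=> mphi phi0.
rewrite (@eq_measure_integral _ _ _ _ (lebC_pushforward c)); last first.
  by move=> A mA _; rewrite /= /pushforward lebC_shift.
by rewrite ge0_integral_pushforward //; exact: measurable_cadd.
Qed.

End lebC_translation_invariance.

Section channel_integral.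
Variables (R : realType) (s2 : R).
Hypothesis s2_gt0 : 0 < s2.
Local Notation LC := (@lebC R).
Local Notation T := (R * R)%type.
Local Open Scope ereal_scope.

Lemma chanIntS k (u : k.+1.-tuple T) F : chanInt s2 u F =
  \int[LC]_y ((fYX s2 (thead u) y)%:E *
    chanInt s2 (behead_tuple u) (fun t => F [tuple of y :: t])).
Proof. by []. Qed.

Lemma chanInt_ge0 k (v : k.-tuple T) F :
  (forall z, 0 <= F z) -> 0 <= chanInt s2 v F.
Proof.
elim: k v F => [|k IH] v F F0 //=.
apply: integral_ge0 => y _; apply: mule_ge0; first exact: fYX_EFin_ge0.
by apply: IH => z; exact: F0.
Qed.

Lemma chanProb_ge0 k (v : k.-tuple T) A : 0 <= chanProb s2 v A.
Proof. by apply: chanInt_ge0 => z; rewrite lee_fin indicE; case: (_ \in _). Qed.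

(* Measurability in a parameter x is the induction invariant: peeling off the
   first coordinate y turns the parameter into the pair (x, y). *)
Lemma measurable_chanInt_param k (v : k.-tuple T) d (X : measurableType d)
    (G : X -> k.-tuple T -> \bar R) :
  measurable_fun setT (fun p : X * k.-tuple T => G p.1 p.2) ->
  (forall x z, 0 <= G x z) ->
  measurable_fun setT (fun x => chanInt s2 v (G x)).
Proof.
elim: k v d X G => [|k IH] v d X G mG G0.
  have := measurableT_comp mG (measurable_fun_pair (@measurable_id _ X setT)
    (measurable_cst ([tuple] : 0.-tuple T))).
  by apply.
have mGcons : measurable_fun setT
    (fun q : (X * T) * k.-tuple T => G q.1.1 [tuple of q.1.2 :: q.2]).
  have := measurableT_comp mG (measurable_fun_pair
    (measurableT_comp (@measurable_fst _ _ X T)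
       (@measurable_fst _ _ (X * T)%type (k.-tuple T)))
    (measurable_cons (measurableT_comp (@measurable_snd _ _ X T)
       (@measurable_fst _ _ (X * T)%type (k.-tuple T)))
       (@measurable_snd _ _ (X * T)%type (k.-tuple T)))).
  by apply.
have mH : measurable_fun setT (fun p : X * T => (fYX s2 (thead v) p.2)%:E *
    chanInt s2 (behead_tuple v) (fun t => G p.1 [tuple of p.2 :: t])).
  apply: emeasurable_funM; last first.
    exact: (IH _ _ (X * T)%type (fun p t => G p.1 [tuple of p.2 :: t]) mGcons).
  apply/measurable_EFinP; apply: measurableT_comp => //.
  exact: measurable_fYX.
have H0 p : 0 <= (fYX s2 (thead v) p.2)%:E *
    chanInt s2 (behead_tuple v) (fun t => G p.1 [tuple of p.2 :: t]).
  by apply: mule_ge0; [exact: fYX_EFin_ge0 | exact: chanInt_ge0].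
have := @measurable_fun_fubini_tonelli_F _ _ X
  (measurableTypeR R * measurableTypeR R)%type R LC _ mH H0.
by apply.
Qed.

Lemma measurable_cons_section k (F : k.+1.-tuple T -> \bar R) (y : T) :
  measurable_fun setT F ->
  measurable_fun setT (fun t : k.-tuple T => F [tuple of y :: t]).
Proof.
move=> mF; have := measurableT_comp mF (measurable_cons (measurable_cst y)
  (@measurable_id _ (k.-tuple T) setT)).
by apply.
Qed.

Section first_coordinate.
Variables (k : nat) (v : k.+1.-tuple T).

Let integrand (F : k.+1.-tuple T -> \bar R) (y : T) :=
  (fYX s2 (thead v) y)%:E * chanInt s2 (behead_tuple v) (fun t => F [tuple of y :: t]).

Lemma integrand_ge0 F : (forall z, 0 <= F z) -> forall y, 0 <= integrand F y.
Proof.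
move=> F0 y; apply: mule_ge0; first exact: fYX_EFin_ge0.
by apply: chanInt_ge0 => z; exact: F0.
Qed.

Lemma measurable_integrand F : measurable_fun setT F -> (forall z, 0 <= F z) ->
  measurable_fun setT (integrand F).
Proof.
move=> mF F0; apply: emeasurable_funM.
  by apply/measurable_EFinP; exact: measurable_fYX.
have mG : measurable_fun setT (fun p : T * k.-tuple T => F [tuple of p.1 :: p.2]).
  have := measurableT_comp mF (measurable_cons (@measurable_fst _ _ T (k.-tuple T))
    (@measurable_snd _ _ T (k.-tuple T))).
  by apply.
apply: (@measurable_chanInt_param k (behead_tuple v) _ T
  (fun y t => F [tuple of y :: t]) mG) => y t.
exact: F0.
Qed.

End first_coordinate.

Lemma chanIntD k (v : k.-tuple T) (F1 F2 : k.-tuple T -> \bar R) :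
  measurable_fun setT F1 -> measurable_fun setT F2 ->
  (forall z, 0 <= F1 z) -> (forall z, 0 <= F2 z) ->
  chanInt s2 v (fun z => F1 z + F2 z) = chanInt s2 v F1 + chanInt s2 v F2.
Proof.
elim: k v F1 F2 => [|k IH] v F1 F2 mF1 mF2 F10 F20 //.
rewrite !chanIntS -ge0_integralD //; first last.
- exact: measurable_integrand.
- by move=> y _; exact: integrand_ge0.
- exact: measurable_integrand.
- by move=> y _; exact: integrand_ge0.
apply: eq_integral => y _.
rewrite IH ?ge0_muleDr ?chanInt_ge0 //; exact: measurable_cons_section.
Qed.

Lemma chanIntZ k (v : k.-tuple T) (c : R) F : (0 <= c)%R ->
  measurable_fun setT F -> (forall z, 0 <= F z) ->
  chanInt s2 v (fun z => c%:E * F z) = c%:E * chanInt s2 v F.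
Proof.
elim: k v F => [|k IH] v F c0 mF F0 //.
rewrite !chanIntS -ge0_integralZl //; first last.
- by move=> y _; exact: integrand_ge0.
- exact: measurable_integrand.
apply: eq_integral => y _.
rewrite IH //; first by rewrite muleCA.
exact: measurable_cons_section.
Qed.

Lemma le_chanInt k (v : k.-tuple T) F1 F2 :
  measurable_fun setT F1 -> measurable_fun setT F2 ->
  (forall z, 0 <= F1 z) -> (forall z, F1 z <= F2 z) ->
  chanInt s2 v F1 <= chanInt s2 v F2.
Proof.
elim: k v F1 F2 => [|k IH] v F1 F2 mF1 mF2 F10 F12 //=.
have F20 z : 0 <= F2 z by exact: le_trans (F10 z) (F12 z).
apply: ge0_le_integral => //.
- by move=> y _; exact: integrand_ge0.
- exact: measurable_integrand.
- exact: measurable_integrand.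
move=> y _; apply: lee_wpmul2l; first exact: fYX_EFin_ge0.
by apply: IH => //; exact: measurable_cons_section.
Qed.

Lemma lebC_setT : LC setT = +oo.
Proof.
have -> : LC setT = (@lebesgue_measure R) setT * (@lebesgue_measure R) setT.
  by rewrite -setXTT /lebC product_measure1E.
by rewrite -set_itvNyy lebesgue_measure_itv mulyy.
Qed.

Lemma integral_fYX_cst x (c : \bar R) : 0 <= c ->
  \int[LC]_y ((fYX s2 x y)%:E * c) = c.
Proof.
case: c => [r| |] // c0.
  rewrite ge0_integralZr ?integral_fYX ?mul1e //.
  - by apply/measurable_EFinP; exact: measurable_fYX.
  - by move=> y _; exact: fYX_EFin_ge0.
under eq_integral do rewrite gt0_muley ?lte_fin ?fYX_gt0 //.
rewrite (integral_cst LC measurableT) -[X in _ = X]mulyy.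
by congr (_ * _); exact: lebC_setT.
Qed.

Lemma chanInt_cst k (v : k.-tuple T) (c : \bar R) : 0 <= c ->
  chanInt s2 v (fun => c) = c.
Proof.
elim: k v => [|k IH] v c0 //.
rewrite chanIntS; under eq_integral do rewrite IH //.
exact: integral_fYX_cst.
Qed.

Lemma chanInt_sum k (v : k.-tuple T) (I : Type) (r : seq I)
    (F : I -> k.-tuple T -> \bar R) :
  (forall i, measurable_fun setT (F i)) -> (forall i z, 0 <= F i z) ->
  chanInt s2 v (fun z => \sum_(i <- r) F i z) = \sum_(i <- r) chanInt s2 v (F i).
Proof.
move=> mF F0; elim: r => [|a r IH].
  under [X in chanInt _ _ X]funext do rewrite big_nil.
  by rewrite big_nil chanInt_cst.
under [X in chanInt _ _ X]funext do rewrite big_cons.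
rewrite big_cons -IH chanIntD //.
- exact: emeasurable_sum.
- by move=> z; apply: sume_ge0.
Qed.

Lemma chanInt_nth k (v : k.-tuple T) (i : nat) (x0 : T) (h : T -> \bar R) :
  (i < k)%N -> measurable_fun setT h -> (forall y, 0 <= h y) ->
  chanInt s2 v (fun z => h (nth x0 z i)) =
  \int[LC]_y ((fYX s2 (nth x0 v i) y)%:E * h y).
Proof.
elim: k v i => [|k IH] v [|i] // ik mh h0; rewrite chanIntS.
  have -> : thead v = nth x0 v 0 by case: v => [[|a s] ?].
  by apply: eq_integral => y _ /=; rewrite chanInt_cst.
have -> : nth x0 v i.+1 = nth x0 (behead_tuple v) i by case: v => [[|a s] ?].
under eq_integral do rewrite /= (IH (behead_tuple v) i) //.
rewrite integral_fYX_cst //.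
by apply: integral_ge0 => y _; rewrite mule_ge0 ?fYX_EFin_ge0.
Qed.

Lemma integral_fYX_EgW x (h : T -> \bar R) :
  measurable_fun setT h -> (forall y, 0 <= h y) ->
  \int[LC]_y ((fYX s2 x y)%:E * h y) = EgW s2 h x.
Proof.
move=> mh h0; rewrite (@integral_lebC_shift R x); first last.
- by move=> y; rewrite mule_ge0 ?fYX_EFin_ge0.
- by apply: emeasurable_funM => //; apply/measurable_EFinP; exact: measurable_fYX.
apply: eq_integral => w _; rewrite muleC /fYX.
suff -> : csub (Defs.cadd x w) x = csub w (0%R, 0%R) by [].
by rewrite /csub /Defs.cadd /= !subr0 !(addrAC _ _ (- _)%R) !subrr !add0r.
Qed.

Lemma chanInt_tnth k (v : k.-tuple T) (t : 'I_k) (h : T -> \bar R) :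
  measurable_fun setT h -> (forall y, 0 <= h y) ->
  chanInt s2 v (fun z => h (tnth z t)) = EgW s2 h (tnth v t).
Proof.
move=> mh h0; rewrite (tnth_nth (0, 0)%R) -integral_fYX_EgW //.
under [X in chanInt _ _ X]funext do rewrite (tnth_nth (0, 0)%R).
exact: chanInt_nth.
Qed.

Lemma chanInt_gbar n (v : n.-tuple T) (g : T -> \bar R) :
  measurable_fun setT g -> (forall y, 0 <= g y) ->
  chanInt s2 v (gbar g (n:=n)) = (n%:R^-1)%:E * \sum_(t < n) EgW s2 g (tnth v t).
Proof.
move=> mg g0.
have mgt (t : 'I_n) : measurable_fun setT (fun z : n.-tuple T => g (tnth z t)).
  exact: measurableT_comp mg (measurable_tnth t).
rewrite /gbar chanIntZ ?invr_ge0 //; first last.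
- by move=> z; apply: sume_ge0.
- exact: emeasurable_sum.
rewrite chanInt_sum //.
by congr (_ * _); apply: eq_bigr => t _; rewrite chanInt_tnth.
Qed.

Lemma chanProb_markov k (v : k.-tuple T) (F : k.-tuple T -> \bar R) (B : R) :
  measurable_fun setT F -> (forall z, 0 <= F z) -> (0 < B)%R ->
  1 <= chanProb s2 v [set z | F z < B%:E] + (B^-1)%:E * chanInt s2 v F.
Proof.
move=> mF F0 B0; set A := [set z | F z < B%:E].
have mA : measurable A.
  by have := measurable_lte measurableT mF (measurable_cst B%:E); rewrite setTI.
have mIA : measurable_fun setT (fun z => (\1_A z : R)%:E).
  by apply/measurable_EFinP; exact: measurable_indic.
have iB0 : (0 <= B^-1)%R by rewrite invr_ge0 ltW.
have markov z : 1 <= (\1_A z)%:E + (B^-1)%:E * F z.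
  rewrite indicE; have [zA|zA] := boolP (z \in A).
    by rewrite leeDl // mule_ge0.
  have BF : B%:E <= F z by rewrite leNgt; apply: contra zA => ?; exact/mem_set.
  by rewrite add0e -(mulVf (lt0r_neq0 B0)) EFinM lee_wpmul2l.
rewrite /chanProb -chanIntZ // -chanIntD //; last 2 first.
- exact: emeasurable_funM.
- by move=> z; rewrite mule_ge0.
rewrite -[leLHS](@chanInt_cst _ v 1) //; apply: le_chanInt => //.
by apply: emeasurable_funD => //; exact: emeasurable_funM.
Qed.

End channel_integral.

Section code_average.
Context {R : realType} {n M : nat} (u : 'I_M -> n.-tuple (R * R)).
Local Open Scope ereal_scope.

Definition code_average (E : R * R -> \bar R) : \bar R :=
  (M%:R^-1)%:E * \sum_(i < M) ((n%:R^-1)%:E * \sum_(t < n) E (tnth (u i) t)).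

Lemma code_average_ge0 E : (forall x, 0 <= E x) -> 0 <= code_average E.
Proof.
move=> E0; rewrite mule_ge0 ?lee_fin ?invr_ge0 // sume_ge0 // => i _.
by rewrite mule_ge0 ?lee_fin ?invr_ge0 // sume_ge0.
Qed.

Lemma ctypeE (v : n.-tuple (R * R)) x :
  ctype v x = (n%:R^-1 * \sum_(t < n) (tnth v t == x)%:R)%R.
Proof.
rewrite /ctype -sum1_card natr_sum big_mkcond /=; congr (_ * _)%R.
by apply: eq_bigr => t _; rewrite /in_mem /= /in_set asboolb; case: (_ == _).
Qed.

Lemma code_average_le_code_type L (xs : 'I_L -> R * R) E :
  (forall x, 0 <= E x) -> (forall i t, exists l, tnth (u i) t = xs l) ->
  code_average E <= \sum_(l < L) ((code_type u (xs l))%:E * E (xs l)).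
Proof.
move=> E0 symbols.
have iM0 : 0 <= (M%:R^-1 : R)%:E by rewrite lee_fin invr_ge0.
have in0 : 0 <= (n%:R^-1 : R)%:E by rewrite lee_fin invr_ge0.
have indic_ge0 (b : bool) : 0 <= (b%:R : R)%:E by rewrite lee_fin; case: b.
set c := fun i t l => ((tnth (u i) t == xs l)%:R : R)%:E * E (xs l).
have c0 i t l : 0 <= c i t l by rewrite mule_ge0.
have symbol_le i t : E (tnth (u i) t) <= \sum_(l < L) c i t l.
  have [l0 ul0] := symbols i t.
  rewrite (bigD1 l0) //= {1}/c ul0 eqxx mul1e leeDl //.
  by apply: sume_ge0 => l _.
have -> : \sum_(l < L) ((code_type u (xs l))%:E * E (xs l)) =
    (M%:R^-1)%:E * \sum_(i < M) ((n%:R^-1)%:E * \sum_(t < n) \sum_(l < L) c i t l).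
  transitivity (\sum_(l < L) ((M%:R^-1)%:E * \sum_(i < M)
      ((n%:R^-1)%:E * \sum_(t < n) c i t l))).
    apply: eq_bigr => l _; rewrite /code_type EFinM -muleA -sumEFin.
    rewrite ge0_sume_distrl; last first.
      by move=> i _; rewrite lee_fin ctypeE mulr_ge0 ?invr_ge0 ?sumr_ge0.
    congr (_ * _); apply: eq_bigr => i _.
    by rewrite ctypeE EFinM -muleA -sumEFin ge0_sume_distrl.
  rewrite -ge0_sume_distrr; last first.
    by move=> l _; apply: sume_ge0 => i _; rewrite mule_ge0 ?sume_ge0.
  congr (_ * _); rewrite exchange_big; apply: eq_bigr => i _ /=.
  rewrite -ge0_sume_distrr; last by move=> l _; rewrite sume_ge0.
  by congr (_ * _); rewrite exchange_big.
apply: lee_wpmul2l => //; apply: lee_sum => i _.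
by apply: lee_wpmul2l => //; exact: lee_sum.
Qed.
End code_average.

Section markov_bound.
Context {R : realType} {s2 : R} {g : R * R -> \bar R} {B : R} {n M : nat}.
Context {u : 'I_M -> n.-tuple (R * R)}.
Hypotheses (s2_gt0 : 0 < s2) (mg : measurable_fun setT g)
  (g_ge0 : forall z, (0 <= g z)%E).
Local Open Scope ereal_scope.

Lemma measurable_gbar : measurable_fun setT (gbar g (n:=n)).
Proof.
apply: emeasurable_funM => //; apply: emeasurable_sum => t.
exact: measurableT_comp mg (measurable_tnth t).
Qed.

Lemma gbar_ge0 z : 0 <= gbar g (n:=n) z.
Proof. by rewrite mule_ge0 ?lee_fin ?invr_ge0 ?sume_ge0. Qed.

Lemma avg_theta_ge0 : 0 <= avg_theta s2 g B u.
Proof.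
rewrite mule_ge0 ?lee_fin ?invr_ge0 // sume_ge0 // => i _.
exact: chanProb_ge0.
Qed.

Lemma avg_theta_markov : (0 < M)%N -> (0 < B)%R ->
  1 <= avg_theta s2 g B u + (B^-1)%:E * code_average u (EgW s2 g).
Proof.
move=> M_gt0 B_gt0.
have iM0 : 0 <= (M%:R^-1 : R)%:E by rewrite lee_fin invr_ge0.
have iB0 : 0 <= (B^-1)%:E by rewrite lee_fin invr_ge0 ltW.
have cost_ge0 i : 0 <= (n%:R^-1)%:E * \sum_(t < n) EgW s2 g (tnth (u i) t).
  by rewrite mule_ge0 ?lee_fin ?invr_ge0 // sume_ge0 // => t _; exact: EgW_ge0.
have -> : 1 = (M%:R^-1 : R)%:E * \sum_(i < M) (1%R)%:E.
  by rewrite sumEFin sumr_const card_ord -EFinM mulVf // pnatr_eq0 -lt0n.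
rewrite /avg_theta /code_average muleCA -ge0_muleDr; first last.
- by rewrite mule_ge0 // sume_ge0.
- by apply: sume_ge0 => i _; exact: chanProb_ge0.
rewrite [X in _ + X]ge0_sume_distrr // -big_split; apply: lee_wpmul2l => //.
apply: lee_sum => i _ /=; rewrite -chanInt_gbar //.
exact: chanProb_markov measurable_gbar gbar_ge0 B_gt0.
Qed.

End markov_bound.

Lemma maxe_subr_le (R : realType) (a b : \bar R) (d : R) :
  (0 <= a)%E -> (a < d%:E)%E -> (0 <= b)%E -> (1 <= a + b)%E ->
  (maxe (1 - b) 0 <= d%:E)%E.
Proof.
move=> a_ge0 a_lt_d b_ge0 one_le; rewrite ge_max (le_trans a_ge0 (ltW a_lt_d)) andbT.
case: b b_ge0 one_le => [r| |] // _ one_le; last by rewrite leNye.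
by rewrite leeBlDr // (le_trans one_le) // leeD2r // ltW.
Qed.

Theorem corollary1 (R : realType) (n M L : nat) (xs : 'I_L -> R * R)
    (s2 P : R) (g : R * R -> \bar R) (eps B delta : R)
    (u : 'I_M -> n.-tuple (R * R)) (D : 'I_M -> set (n.-tuple (R * R))) :
  (0 < n)%N -> (0 < M)%N -> injective xs -> 0 < s2 -> 0 < P ->
  measurable_fun setT g -> (forall z, (0 <= g z)%E) ->
  0 < eps -> 0 < B ->
  is_code_B s2 P xs u D g eps B delta ->
  (delta%:E >= maxe (1 - (B^-1)%:E *
       \sum_(l < L) ((code_type u (xs l))%:E * EgW s2 g (xs l))) 0)%E.
Proof.
move=> _ M_gt0 _ s2_gt0 _ mg g_ge0 _ B_gt0 [[[symbols _ _ _ _] _] theta_lt_delta].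
have EgW_g_ge0 x : (0 <= EgW s2 g x)%E by exact: EgW_ge0.
have avg_le := code_average_le_code_type u _ xs _ EgW_g_ge0 symbols.
have iB_ge0 : (0 <= (B^-1)%:E)%E by rewrite lee_fin invr_ge0 ltW.
apply: maxe_subr_le (avg_theta_ge0 s2_gt0) theta_lt_delta _ _.
  exact: mule_ge0 iB_ge0 (le_trans (code_average_ge0 u _ EgW_g_ge0) avg_le).
apply: le_trans (avg_theta_markov s2_gt0 mg g_ge0 M_gt0 B_gt0) _.
by apply: leeD => //; exact: lee_wpmul2l.
Qed.
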